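(* Let $h>0$ and let $f:\mathbb R\to\mathbb R$ be a compactly supported $C^1$ function whose restriction to each interval $(ih,(i+1)h)$, $i\in\mathbb Z$, is a polynomial of degree at most $5$. Then $$\int_{\mathbb R} f(t)\,dt=\sum_{i\in\mathbb Z} h\Big(\tfrac{7}{15}\,f(ih)+\tfrac{8}{15}\,f\big(\tfrac{2i+1}{2}h\big)\Big).$$
   Context: This is the exact quadrature rule for $C^1$ quintic splines with uniform knots $h\mathbb Z$ on the whole real line (two nodes per subinterval: the knots and the midpoints). *)

From Stdlib Require Import Reals ZArith.
Open Scope R_scope.

Definition zsum (m n : Z) (g : Z -> R) : R :=
  sum_f_R0 (fun k => g (m + Z.of_nat k)%Z) (Z.to_nat (n - m)).

Definition is_C1 (f : R -> R) : Prop :=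
  exists f' : R -> R, continuity f' /\ forall x, derivable_pt_lim f x (f' x).

Definition compact_support (f : R -> R) : Prop :=
  exists a b : R, forall t, (t < a \/ b < t) -> f t = 0.

Definition piecewise_quintic (h : R) (f : R -> R) : Prop :=
  forall i : Z, exists c : nat -> R, forall t,
    IZR i * h < t < IZR (i + 1) * h -> f t = sum_f_R0 (fun k => c k * t ^ k) 5.

(* Every quintic p is integrated exactly over a cell [a, a + h] by
     h (7/30 (p a + p (a + h)) + 8/15 p (a + h/2)) + h^2/60 (p' a - p' (a + h)).
   Since f and f' are continuous, their values at a knot are shared by the two
   adjacent cells, so summing over the cells makes the terms 7h/30 f - h^2/60 f'
   telescope (doubling the knot weight to 7/15); at the ends of the support f and
   f' vanish, so nothing remains of them. *)

From Stdlib Require Import Reals ZArith Lra Lia.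
From Coquelicot Require Import Coquelicot.
Open Scope R_scope.

Lemma locally_open_interval (P : R -> Prop) a b t :
  a < t < b -> (forall y, a < y < b -> P y) -> locally t P.
Proof.
  intros Ht HP.
  assert (Hd : 0 < Rmin (t - a) (b - t)) by (apply Rmin_glb_lt; lra).
  exists (mkposreal _ Hd); intros y Hy.
  change (Rabs (y - t) < Rmin (t - a) (b - t)) in Hy.
  apply Rabs_def2 in Hy.
  pose proof (Rmin_l (t - a) (b - t)); pose proof (Rmin_r (t - a) (b - t)).
  apply HP; lra.
Qed.

Lemma continuity_pt_eq_left (g1 g2 : R -> R) a b :
  a < b -> continuity_pt g1 a -> continuity_pt g2 a ->
  (forall t, a < t < b -> g1 t = g2 t) -> g1 a = g2 a.
Proof.
  intros Hab H1%continuity_pt_filterlim H2%continuity_pt_filterlim He.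
  apply (@filterlim_locally_unique R R_AbsRing R_NormedModule (at_right a)
           (Proper_StrongProper _ (at_right_proper_filter a)) g2).
  - apply (filterlim_ext_loc g1).
    + exists (mkposreal _ (proj2 (Rlt_0_minus _ _) Hab)); intros t Ht Hat.
      change (Rabs (t - a) < b - a) in Ht; apply Rabs_def2 in Ht.
      apply He; lra.
    + exact (filterlim_filter_le_1 _ (filter_le_within _) H1).
  - exact (filterlim_filter_le_1 _ (filter_le_within _) H2).
Qed.

Lemma continuity_pt_eq_right (g1 g2 : R -> R) a b :
  a < b -> continuity_pt g1 b -> continuity_pt g2 b ->
  (forall t, a < t < b -> g1 t = g2 t) -> g1 b = g2 b.
Proof.
  intros Hab H1%continuity_pt_filterlim H2%continuity_pt_filterlim He.
  apply (@filterlim_locally_unique R R_AbsRing R_NormedModule (at_left b)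
           (Proper_StrongProper _ (at_left_proper_filter b)) g2).
  - apply (filterlim_ext_loc g1).
    + exists (mkposreal _ (proj2 (Rlt_0_minus _ _) Hab)); intros t Ht Htb.
      change (Rabs (t - b) < b - a) in Ht; apply Rabs_def2 in Ht.
      apply He; lra.
    + exact (filterlim_filter_le_1 _ (filter_le_within _) H1).
  - exact (filterlim_filter_le_1 _ (filter_le_within _) H2).
Qed.

Lemma derivable_pt_lim_eq_open_interval (f g : R -> R) (l l' : R) a b t :
  a < t < b -> (forall y, a < y < b -> f y = g y) ->
  derivable_pt_lim f t l -> is_derive g t l' -> l = l'.
Proof.
  intros Ht Hfg Hf Hg.
  assert (Hg' : is_derive g t l).
  { apply (is_derive_ext_loc f); [exact (locally_open_interval _ a b t Ht Hfg)|].
    now apply is_derive_Reals. }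
  now rewrite <- (is_derive_unique _ _ _ Hg), (is_derive_unique _ _ _ Hg').
Qed.

Definition quintic (c : nat -> R) (t : R) : R := sum_f_R0 (fun k => c k * t ^ k) 5.

Definition quintic_deriv (c : nat -> R) (t : R) : R :=
  c 1%nat + 2 * c 2%nat * t + 3 * c 3%nat * t ^ 2 + 4 * c 4%nat * t ^ 3
  + 5 * c 5%nat * t ^ 4.

Definition quintic_prim (c : nat -> R) (t : R) : R :=
  c 0%nat * t + c 1%nat * t ^ 2 / 2 + c 2%nat * t ^ 3 / 3 + c 3%nat * t ^ 4 / 4
  + c 4%nat * t ^ 5 / 5 + c 5%nat * t ^ 6 / 6.

Lemma is_derive_quintic c t : is_derive (quintic c) t (quintic_deriv c t).
Proof. unfold quintic, quintic_deriv; simpl; auto_derive; [easy | ring]. Qed.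

Lemma is_derive_quintic_prim c t : is_derive (quintic_prim c) t (quintic c t).
Proof. unfold quintic, quintic_prim; simpl; auto_derive; [easy | field]. Qed.

Lemma continuity_quintic c t : continuity_pt (quintic c) t.
Proof.
  apply derivable_continuous_pt; exists (quintic_deriv c t).
  apply is_derive_Reals, is_derive_quintic.
Qed.

Lemma continuity_quintic_deriv c t : continuity_pt (quintic_deriv c) t.
Proof.
  apply derivable_continuous_pt.
  exists (2 * c 2%nat + 6 * c 3%nat * t + 12 * c 4%nat * t ^ 2 + 20 * c 5%nat * t ^ 3).
  apply is_derive_Reals; unfold quintic_deriv; auto_derive; [easy | ring].
Qed.

Lemma quintic_prim_increment c a h :
  quintic_prim c (a + h) - quintic_prim c a =
  h * (7 / 30 * (quintic c a + quintic c (a + h)) + 8 / 15 * quintic c (a + h / 2))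
  + h ^ 2 / 60 * (quintic_deriv c a - quintic_deriv c (a + h)).
Proof. unfold quintic_prim, quintic, quintic_deriv; simpl; field. Qed.

(* [sum_f_R0 _ N] has N + 1 terms, one more than there are cells. *)
Lemma is_RInt_telescope (f : R -> R) (x g E : Z -> R) m (N : nat) :
  (forall i, is_RInt f (x i) (x (i + 1)%Z) (g i + E (i + 1)%Z - E i)) ->
  is_RInt f (x m) (x (m + Z.of_nat N)%Z)
    (sum_f_R0 (fun k => g (m + Z.of_nat k)%Z) N - g (m + Z.of_nat N)%Z
     + E (m + Z.of_nat N)%Z - E m).
Proof.
  intros Hcell; induction N as [|N IH]; simpl.
  - rewrite Z.add_0_r; replace (g m - g m + E m - E m) with (@zero R_NormedModule)
      by (unfold zero; simpl; ring).
    apply is_RInt_point.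
  - replace (m + Z.pos (Pos.of_succ_nat N))%Z with (m + Z.of_nat N + 1)%Z by lia.
    replace (sum_f_R0 (fun k => g (m + Z.of_nat k)%Z) N + g (m + Z.of_nat N + 1)%Z
             - g (m + Z.of_nat N + 1)%Z + E (m + Z.of_nat N + 1)%Z - E m)
      with (plus (sum_f_R0 (fun k => g (m + Z.of_nat k)%Z) N - g (m + Z.of_nat N)%Z
                  + E (m + Z.of_nat N)%Z - E m)
                 (g (m + Z.of_nat N)%Z + E (m + Z.of_nat N + 1)%Z - E (m + Z.of_nat N)%Z))
      by (unfold plus; simpl; ring).
    exact (is_RInt_Chasles f _ _ _ _ _ IH (Hcell _)).
Qed.

Section QuinticSpline.

Variables (h : R) (f f' : R -> R).
Hypothesis h_gt0 : 0 < h.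
Hypothesis f_deriv : forall x, derivable_pt_lim f x (f' x).
Hypothesis f'_cont : continuity f'.

Let f_cont x : continuity_pt f x.
Proof. apply derivable_continuous_pt; exists (f' x); apply f_deriv. Qed.

Definition boundary_term (x : R) : R := 7 * h / 30 * f x - h ^ 2 / 60 * f' x.

Definition cell_rule (i : Z) : R :=
  h * (7 / 15 * f (IZR i * h) + 8 / 15 * f ((2 * IZR i + 1) / 2 * h)).

Lemma is_RInt_quintic_cell a c :
  (forall t, a < t < a + h -> f t = quintic c t) ->
  is_RInt f a (a + h)
    (h * (7 / 15 * f a + 8 / 15 * f (a + h / 2))
     + boundary_term (a + h) - boundary_term a).
Proof.
  intros Hc.
  assert (Hc' : forall t, a < t < a + h -> f' t = quintic_deriv c t).
  { intros t Ht; exact (derivable_pt_lim_eq_open_interval _ _ _ _ _ _ _ Ht Hc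
                          (f_deriv t) (is_derive_quintic c t)). }
  assert (fa : f a = quintic c a)
    by (apply (continuity_pt_eq_left _ _ a (a + h)); auto using continuity_quintic; lra).
  assert (fb : f (a + h) = quintic c (a + h))
    by (apply (continuity_pt_eq_right _ _ a); auto using continuity_quintic; lra).
  assert (f'a : f' a = quintic_deriv c a)
    by (apply (continuity_pt_eq_left _ _ a (a + h));
        auto using continuity_quintic_deriv; lra).
  assert (f'b : f' (a + h) = quintic_deriv c (a + h))
    by (apply (continuity_pt_eq_right _ _ a);
        auto using continuity_quintic_deriv; lra).
  assert (fm : f (a + h / 2) = quintic c (a + h / 2)) by (apply Hc; lra).
  apply (is_RInt_ext (quintic c)).
  { rewrite Rmin_left, Rmax_right by lra; intros x Hx; symmetry; apply Hc; lra. }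
  replace (_ + _ - _) with (minus (quintic_prim c (a + h)) (quintic_prim c a)).
  - apply (is_RInt_derive (quintic_prim c)); intros x _.
    + apply is_derive_quintic_prim.
    + apply continuity_pt_filterlim, continuity_quintic.
  - unfold boundary_term; rewrite fa, fb, fm, f'a, f'b.
    change (minus ?x ?y) with (x - y); rewrite quintic_prim_increment; lra.
Qed.

Lemma is_RInt_cell_rule (i : Z) :
  piecewise_quintic h f ->
  is_RInt f (IZR i * h) (IZR (i + 1) * h)
    (cell_rule i + boundary_term (IZR (i + 1) * h) - boundary_term (IZR i * h)).
Proof.
  intros Hq; destruct (Hq i) as [c Hc].
  assert (Hnext : IZR (i + 1) * h = IZR i * h + h) by (rewrite plus_IZR; ring).
  assert (Hmid : (2 * IZR i + 1) / 2 * h = IZR i * h + h / 2) by field.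
  unfold cell_rule; rewrite Hnext, Hmid.
  apply (is_RInt_quintic_cell _ c); intros t Ht; apply Hc; lra.
Qed.

Lemma vanish_first_order_left a :
  (forall t, t < a -> f t = 0) -> f a = 0 /\ f' a = 0.
Proof.
  intros Hz.
  assert (Hz' : forall t, a - 1 < t < a -> f t = 0) by (intros; apply Hz; lra).
  split.
  - apply (continuity_pt_eq_right f (fun _ => 0) (a - 1)); auto; [lra|].
    apply continuity_pt_const; now intros ? ?.
  - apply (continuity_pt_eq_right f' (fun _ => 0) (a - 1)); [lra|apply f'_cont| |].
    + apply continuity_pt_const; now intros ? ?.
    + intros t Ht; exact (derivable_pt_lim_eq_open_interval _ _ _ _ _ _ _ Ht Hz'
                            (f_deriv t) (is_derive_const 0 t)).
Qed.

Lemma vanish_first_order_right b :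
  (forall t, b < t -> f t = 0) -> f b = 0 /\ f' b = 0.
Proof.
  intros Hz.
  assert (Hz' : forall t, b < t < b + 1 -> f t = 0) by (intros; apply Hz; lra).
  split.
  - apply (continuity_pt_eq_left f (fun _ => 0) b (b + 1)); auto; [lra|].
    apply continuity_pt_const; now intros ? ?.
  - apply (continuity_pt_eq_left f' (fun _ => 0) b (b + 1)); [lra|apply f'_cont| |].
    + apply continuity_pt_const; now intros ? ?.
    + intros t Ht; exact (derivable_pt_lim_eq_open_interval _ _ _ _ _ _ _ Ht Hz'
                            (f_deriv t) (is_derive_const 0 t)).
Qed.

End QuinticSpline.

Theorem mainTheorem7 (h : R) (f : R -> R) :
  0 < h -> is_C1 f -> compact_support f -> piecewise_quintic h f ->
  forall m n : Z, (m <= n)%Z ->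
    (forall t, t < IZR m * h \/ IZR n * h < t -> f t = 0) ->
    exists pr : Riemann_integrable f (IZR m * h) (IZR n * h),
      RiemannInt pr =
      zsum m n (fun i => h * (7 / 15 * f (IZR i * h)
                              + 8 / 15 * f ((2 * IZR i + 1) / 2 * h))).
Proof.
  intros Hh [f' [Hc Hd]] _ Hq m n Hmn Hz.
  assert (Hle : IZR m * h <= IZR n * h)
    by (apply Rmult_le_compat_r; [lra | now apply IZR_le]).
  exists (continuity_implies_RiemannInt Hle
            (fun x _ => derivable_continuous_pt _ _ (exist _ (f' x) (Hd x)))).
  change (zsum m n _) with (zsum m n (cell_rule h f)); rewrite <- RInt_Reals.
  set (N := Z.to_nat (n - m)).
  assert (EN : (m + Z.of_nat N)%Z = n) by (unfold N; lia).
  pose proof (is_RInt_telescope f (fun i => IZR i * h) (cell_rule h f)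
                (fun i => boundary_term h f f' (IZR i * h)) m N
                (fun i => is_RInt_cell_rule h f f' Hh Hd Hc i Hq)) as Hsum.
  rewrite EN in Hsum; rewrite (is_RInt_unique _ _ _ _ Hsum).
  destruct (vanish_first_order_left f f' Hd Hc (IZR m * h)) as [fm f'm].
  { intros; apply Hz; lra. }
  destruct (vanish_first_order_right f f' Hd Hc (IZR n * h)) as [fn f'n].
  { intros; apply Hz; lra. }
  assert (Hlast : cell_rule h f n = 0).
  { unfold cell_rule; rewrite fn, (Hz ((2 * IZR n + 1) / 2 * h)) by (right; nra); ring. }
  unfold zsum, boundary_term; fold N; rewrite Hlast, fm, f'm, fn, f'n; ring.
Qed.
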